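(* Let $p$ be a prime, $k\ge 1$, $q=p^k$, and $n\ge 1$. Then for every integer $i$ with $1\le i\le kn$, we have $p^{kn-i}\in\sigma\big(\mathrm{AGL}(n,q)\big)$.
   Context: For a finite group $G$ and a subgroup $H\le G$, a subset $\mathcal F\subseteq G$ is called $H$-intersecting if for all $g,g'\in\mathcal F$ there is $x\in G$ with $gxH=g'xH$ (equivalently $x^{-1}g'^{-1}gx\in H$). The intersection density is $\rho(G,H)=\max\{|\mathcal F|/|H| : \mathcal F\subseteq G \text{ is } H\text{-intersecting}\}$, and the intersection spectrum of $G$ is $\sigma(G)=\{\rho(G,H): H\le G\}$. $\mathrm{AGL}(n,q)$ is the group of affine maps $v\mapsto Av+b$ of $\mathbb F_q^n$ with $A\in\mathrm{GL}(n,q)$, $b\in\mathbb F_q^n$, written as pairs $(A,b)$ with product $(A,b)(A',b')=(AA',Ab'+b)$. *)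

From mathcomp Require Import all_boot all_order all_algebra all_fingroup.
Set Implicit Arguments. Unset Strict Implicit. Unset Printing Implicit Defensive.
Import GRing.Theory.

Local Open Scope group_scope.

Definition intersectingb (gT : finGroupType) (G H Fs : {set gT}) : bool :=
  [forall g in Fs, forall g' in Fs, exists x in G, (g * x) *: H == (g' * x) *: H].

Definition max_intersecting (gT : finGroupType) (G H : {set gT}) : nat :=
  (\max_(Fs in powerset G | intersectingb G H Fs) #|Fs|)%N.

Definition int_density (gT : finGroupType) (G H : {set gT}) : rat :=
  ((max_intersecting G H)%:R / (#|H|)%:R)%R.

Definition in_int_spectrum (gT : finGroupType) (G : {set gT}) (r : rat) : Prop :=
  exists H : {group gT}, H \subset G /\ int_density G H = r.

Definition AGL (F : finFieldType) (n : nat) : {set {perm 'cV[F]_n}} :=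
  [set s : {perm 'cV[F]_n} | [exists A : 'M[F]_n, [exists b : 'cV[F]_n,
     (A \in unitmx) && [forall v : 'cV[F]_n, s v == (A *m v + b)%R]]]].

From mathcomp Require Import all_boot all_order all_algebra all_fingroup all_solvable.
Set Implicit Arguments. Unset Strict Implicit. Unset Printing Implicit Defensive.
Import GRing.Theory.

(* Let T be the group of translations v |-> v + b of F^n, a p-group of order
   q^n = p^(kn) which is normal in AGL(n,q).  For 1 <= i <= kn pick a subgroup
   L <= T of order p^i; we show rho(AGL(n,q), L) = |T|/|L| = p^(kn-i).
   - Upper bound (general group theory): if H <= K and G normalises K, then
     every H-intersecting subset of G lies in one left coset of K, hence has at
     most |K| elements.
   - Lower bound: T itself is L-intersecting.  Given translations by a and a',
     pick a nontrivial translation by c in L and an invertible matrix A with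
     A (a - a') = c; conjugating by the linear map A makes the two cosets agree.
     This uses that GL(n,F) is transitive on nonzero vectors, which follows
     from Gaussian elimination: every nonzero column is the image of the first
     basis vector under some invertible matrix. *)

Local Open Scope ring_scope.

Section GLTransitive.
Variables (F : fieldType) (n : nat).

(* A nonzero column has rank 1, so its Gaussian decomposition exhibits it as
   the image of the first basis vector pid_mx 1 under an invertible matrix. *)
Lemma image_of_pid1 (d : 'cV[F]_n) :
  d != 0 -> exists2 A : 'M[F]_n, A \in unitmx & A *m pid_mx 1 = d.
Proof.
move=> nz_d; have rank_d : \rank d = 1%N.
  by apply/eqP; rewrite eqn_leq rank_leq_col lt0n mxrank_eq0.
set r := row_ebase d 0 0.
have unit_r : r \is a GRing.unit by rewrite /r -det_mx11 -unitmxE row_ebase_unit.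
exists (r *: col_ebase d); first by rewrite unitmxZ // col_ebase_unit.
rewrite -{2}(mulmx_ebase d) rank_d [row_ebase d]mx11_scalar mul_mx_scalar.
by rewrite scalemxAl.
Qed.

Lemma unitmx_transitive (c d : 'cV[F]_n) :
  d != 0 -> c != 0 -> exists2 A : 'M[F]_n, A \in unitmx & A *m d = c.
Proof.
move=> /image_of_pid1 [D unit_D <-] /image_of_pid1 [C unit_C <-].
exists (C *m invmx D); first by rewrite unitmx_mul unit_C unitmx_inv.
by rewrite -mulmxA mulKmx.
Qed.

End GLTransitive.

Local Close Scope ring_scope.
Local Open Scope group_scope.

Section IntersectingFamilies.
Variables (gT : finGroupType) (G : {set gT}) (H K : {group gT}).
Hypotheses (sHK : H \subset K) (nKG : G \subset 'N(K)).

(* g x H = g0 x H with x normalising K >= H forces g0^-1 g \in K. *)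
Lemma intersecting_sub_lcoset (Fs : {set gT}) (g0 : gT) :
  intersectingb G H Fs -> g0 \in Fs -> Fs \subset g0 *: K.
Proof.
move=> int_Fs g0_Fs; apply/subsetP => g g_Fs.
have /forall_inP/(_ g g_Fs)/forall_inP/(_ g0 g0_Fs)/exists_inP [x xG eq_coset]
  := int_Fs.
have : g * x \in (g0 * x) *: H by rewrite -(eqP eq_coset) lcoset_refl.
rewrite mem_lcoset invMg => /(subsetP sHK) conj_K.
have : (g0^-1 * g) ^ x \in K by rewrite conjgE !mulgA in conj_K *.
by rewrite memJ_norm ?(subsetP nKG) // mem_lcoset.
Qed.

Lemma max_intersecting_le : (max_intersecting G H <= #|K|)%N.
Proof.
apply/bigmax_leqP => Fs /andP [_ int_Fs].
have [-> | [g0 g0_Fs]] := set_0Vmem Fs; first by rewrite cards0.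
by rewrite -(card_lcoset K g0) subset_leq_card // intersecting_sub_lcoset.
Qed.

Lemma max_intersecting_eq :
  K \subset G -> intersectingb G H K -> max_intersecting G H = #|K|.
Proof.
move=> sKG int_K; apply/eqP; rewrite eqn_leq max_intersecting_le /=.
apply: (@leq_bigmax_cond _ (fun Fs => (Fs \in powerset G) && intersectingb G H Fs)
  (fun Fs => #|Fs|) K).
by rewrite powersetE sKG.
Qed.

End IntersectingFamilies.

Section Translations.
Variables (F : finFieldType) (n : nat).
Local Notation vec := 'cV[F]_n.

Definition tr (b : vec) : {perm vec} := perm (@addIr _ b).

Lemma trE (b v : vec) : tr b v = (v + b)%R.
Proof. by rewrite permE. Qed.

Lemma trD (a b : vec) : tr a * tr b = tr (a + b)%R.
Proof. by apply/permP => v; rewrite permM !trE addrA. Qed.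

Lemma tr0 : tr 0%R = 1.
Proof. by apply/permP => v; rewrite trE addr0 perm1. Qed.

Lemma tr_inj : injective tr.
Proof. by move=> a b /permP /(_ 0%R); rewrite !trE !add0r. Qed.

Definition translations : {set {perm vec}} := [set tr b | b : vec].

Lemma group_set_translations : group_set translations.
Proof.
apply/group_setP; split; first by rewrite -tr0 imset_f.
by move=> _ _ /imsetP [a _ ->] /imsetP [b _ ->]; rewrite trD imset_f.
Qed.

Canonical translations_group := Group group_set_translations.

Lemma card_translations : #|translations| = (#|F| ^ n)%N.
Proof. by rewrite card_imset ?card_mx ?muln1 //; apply: tr_inj. Qed.

Lemma mem_AGL (A : 'M[F]_n) (b : vec) (s : {perm vec}) :
  A \in unitmx -> (forall v, s v = A *m v + b)%R -> s \in AGL F n.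
Proof.
move=> unit_A sE; rewrite inE; apply/existsP; exists A; apply/existsP; exists b.
by rewrite unit_A; apply/forallP => v; rewrite sE.
Qed.

Lemma translations_sub_AGL : translations \subset AGL F n.
Proof.
apply/subsetP => _ /imsetP [b _ ->].
by apply: (@mem_AGL _ b _ (unitmx1 _ _)) => v; rewrite trE mul1mx.
Qed.

(* Conjugating the translation by c by v |-> A v + b gives the translation
   by A c; in particular AGL(n,F) normalises the translation group. *)
Lemma AGL_norm_translations : AGL F n \subset 'N(translations).
Proof.
apply/subsetP => x; rewrite !inE => /existsP [A /existsP [b /andP [_ /forallP xE]]].
apply/subsetP => _ /imsetP [_ /imsetP [c _ ->] ->].
apply/imsetP; exists (A *m c)%R => //; apply/permP => v.
have xE' w : x w = (A *m w + b)%R by apply/eqP/xE.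
by rewrite conjgE !permM !trE xE' mulmxDr addrAC -xE' permKV.
Qed.

(* If L contains a nontrivial translation, the translation group is an
   L-intersecting subset of AGL(n,F): for translations by a <> a', the linear
   map A with A (a - a') = c aligns the cosets tr a A L and tr a' A L. *)
Lemma translations_intersecting (L : {group {perm vec}}) (c : vec) :
  c != 0%R -> tr c \in L -> intersectingb (AGL F n) L translations.
Proof.
move=> nz_c cL; apply/forall_inP => _ /imsetP [a _ ->].
apply/forall_inP => _ /imsetP [a' _ ->]; apply/exists_inP.
have [-> | neq_aa'] := eqVneq a a'.
  by exists 1; rewrite ?eqxx // (subsetP translations_sub_AGL) ?group1.
have [A unit_A eq_Ac] : exists2 A : 'M[F]_n, A \in unitmx & (A *m (a - a'))%R = c.
  by apply: unitmx_transitive; rewrite // subr_eq0.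
have inj_A : injective (fun v : vec => A *m v)%R.
  by move=> u v eq_uv; rewrite -(mulKmx unit_A u) eq_uv mulKmx.
exists (perm inj_A); first by apply: (@mem_AGL A 0%R _ unit_A) => v; rewrite permE addr0.
have -> : tr a * perm inj_A = tr a' * perm inj_A * tr c.
  apply/permP => v; rewrite !permM !trE !permE -eq_Ac -mulmxDr.
  by rewrite -addrA subrKC.
by apply/eqP/lcoset_eqP; rewrite mem_lcoset mulKg.
Qed.

Lemma nontrivial_translation (L : {group {perm vec}}) :
  L \subset translations -> L :!=: 1 -> exists2 c : vec, c != 0%R & tr c \in L.
Proof.
move=> sLT /trivgPn [t tL nt_t].
have /imsetP [c _ tE] := subsetP sLT t tL.
exists c; last by rewrite -tE.
by apply: contra_neq nt_t => c0; rewrite tE c0 tr0.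
Qed.

End Translations.

Local Close Scope group_scope.

Theorem theorem1p2 (p k n : nat) (F : finFieldType) :
  prime p -> (1 <= k)%N -> #|F| = (p ^ k)%N -> (1 <= n)%N ->
  forall i : nat, (1 <= i <= k * n)%N ->
    in_int_spectrum (AGL F n) ((p ^ (k * n - i))%:R : rat).
Proof.
move=> p_pr _ cardF _ i /andP [i_gt0 i_le].
set T := translations F n.
have card_T : #|T| = p ^ (k * n) by rewrite card_translations cardF -expnM.
have pT : (p.-group T)%g by rewrite /pgroup card_T pnatX pnat_id.
have i_le_log : i <= logn p #|T| by rewrite card_T pfactorK.
have [L [sLT _ card_L]] := normal_pgroup pT (normal_refl _) i_le_log.
have ntL : (L :!=: 1)%g.
  by rewrite -cardG_gt1 card_L -{1}(expn0 p) ltn_exp2l // prime_gt1.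
have [c nz_c cL] := nontrivial_translation sLT ntL.
exists L; split; first exact: subset_trans sLT (translations_sub_AGL F n).
rewrite /int_density (max_intersecting_eq sLT (AGL_norm_translations F n)
  (translations_sub_AGL F n) (translations_intersecting nz_c cL)).
rewrite card_T card_L -{1}(subnK i_le) expnD natrM mulfK //.
by rewrite Num.Theory.pnatr_eq0 -lt0n expn_gt0 prime_gt0.
Qed.
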